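(* Let $n,m,p,N\in\mathbb{N}_+$, $B\in\mathbb{R}^{n\times m}$, $C\in\mathbb{R}^{p\times n}$ of full column rank, $x_0\in\mathbb{R}^n$, $r_1,\dots,r_N\in\mathbb{R}^p$, $r_0:=Cx_0$, and $\mathcal{S}_{\rm M1}\subseteq\mathbb{R}^{n\times n}\times\mathbb{R}^{m\times N}$. Problem (MOPUL1) is: minimize $\sum_{t=1}^N\|y_t-r_t\|_2$ over $(A,U)\in\mathcal{S}_{\rm M1}$, $U=(u_0,\dots,u_{N-1})$, where $x_t=Ax_{t-1}+Bu_{t-1}$ ($t=1,\dots,N$) and $y_t=Cx_t$; let $v^*_{\rm M1}$ be its optimal value and $\mathcal{F}^*_{\rm M1}$ its optimal solution set. Problem (AMOPUL1) is: minimize $\sum_{t=1}^N\|CAC^{\dagger}r_{t-1}+CBu_{t-1}-r_t\|_2$ over $(A,U)\in\mathcal{S}_{\rm M1}$; let $v^*_{\rm A1}$ be its optimal value. For $\epsilon=(\epsilon_1,\dots,\epsilon_N)\in\mathbb{R}^N_+$ let $\mathcal{Z}_\epsilon:=\{(A,U)\in\mathcal{S}_{\rm M1}: \hat y_0=Cx_0,\ \hat y_t=CAC^{\dagger}\hat y_{t-1}+CBu_{t-1},\ \|\hat y_t-r_t\|_2\le\epsilon_t,\ t=1,\dots,N\}$. For $(A^*,U^* )\in\mathcal{F}^*_{\rm M1}$ with $U^*=(u^*_0,\dots,u^*_{N-1})$, define $\hat y^*_0=Cx_0$, $\hat y^*_t=CA^*C^{\dagger}\hat y^*_{t-1}+CBu^*_{t-1}$,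 $\epsilon^*_t=\|\hat y^*_t-r_t\|_2$, and $\mathcal{Z}^*_{\epsilon}(A^*,U^* ):=\mathcal{Z}_{\epsilon^*}$. If (MOPUL1) is attainable (i.e., $\mathcal{F}^*_{\rm M1}\ne\emptyset$), then $$v^*_{\rm A1}\le(1+\gamma^* )v^*_{\rm M1},\qquad \gamma^*:=\inf_{(A^*,U^* )\in\mathcal{F}^*_{\rm M1}}\ \inf_{(A,U)\in\mathcal{Z}^*_{\epsilon}(A^*,U^* )}\|CAC^{\dagger}\|_2.$$
   Context: $C^{\dagger}$ is the Moore–Penrose inverse of $C$; $\|\cdot\|_2$ is the Euclidean norm for vectors and the spectral norm for matrices. In the paper $\mathcal{S}_{\rm M1}$ is assumed SD representable, though this is not used in the claim. *)

From HB Require Import structures.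
From mathcomp Require Import all_boot all_order all_algebra.
From mathcomp Require Import classical_sets reals.
Set Implicit Arguments. Unset Strict Implicit. Unset Printing Implicit Defensive.
Import Order.TTheory GRing.Theory Num.Theory.
Local Open Scope ring_scope.
Local Open Scope classical_set_scope.

Definition vnorm (R : realType) (k : nat) (v : 'cV[R]_k) : R :=
  Num.sqrt (\sum_(i < k) v i 0 ^+ 2).

Definition specnorm (R : realType) (a b : nat) (M : 'M[R]_(a, b)) : R :=
  sup [set vnorm (M *m x) | x in [set x : 'cV[R]_b | vnorm x <= 1]].

Definition is_MP_inverse (R : realType) (a b : nat)
  (C : 'M[R]_(a, b)) (Cd : 'M[R]_(b, a)) : Prop :=
  [/\ C *m Cd *m C = C, Cd *m C *m Cd = Cd,
      (C *m Cd)^T = C *m Cd & (Cd *m C)^T = Cd *m C].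

(* u_t : the (t+1)-th column of U = (u_0,...,u_{N-1}); 0 if t >= N (never used) *)
Definition ucol (R : realType) (m N : nat) (U : 'M[R]_(m, N)) (t : nat) : 'cV[R]_m :=
  \col_i (if insub t is Some j then U i j else 0).

Fixpoint traj (R : realType) (n m N : nat) (A : 'M[R]_n) (B : 'M[R]_(n, m))
  (x0 : 'cV[R]_n) (U : 'M[R]_(m, N)) (t : nat) : 'cV[R]_n :=
  match t with
  | 0 => x0
  | t'.+1 => A *m traj A B x0 U t' + B *m ucol U t'
  end.

Fixpoint yhat (R : realType) (n m p N : nat) (C : 'M[R]_(p, n)) (Cd : 'M[R]_(n, p))
  (A : 'M[R]_n) (B : 'M[R]_(n, m)) (x0 : 'cV[R]_n) (U : 'M[R]_(m, N)) (t : nat)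
  : 'cV[R]_p :=
  match t with
  | 0 => C *m x0
  | t'.+1 => C *m A *m Cd *m yhat C Cd A B x0 U t' + C *m B *m ucol U t'
  end.

Definition objM1 (R : realType) (n m p N : nat) (C : 'M[R]_(p, n))
  (B : 'M[R]_(n, m)) (x0 : 'cV[R]_n) (r : nat -> 'cV[R]_p)
  (AU : 'M[R]_n * 'M[R]_(m, N)) : R :=
  \sum_(t < N) vnorm (C *m traj AU.1 B x0 AU.2 t.+1 - r t.+1).

Definition objA1 (R : realType) (n m p N : nat) (C : 'M[R]_(p, n))
  (Cd : 'M[R]_(n, p)) (B : 'M[R]_(n, m)) (r : nat -> 'cV[R]_p)
  (AU : 'M[R]_n * 'M[R]_(m, N)) : R :=
  \sum_(t < N) vnorm (C *m AU.1 *m Cd *m r t + C *m B *m ucol AU.2 t - r t.+1).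

Definition optval (R : realType) (T : Type) (S : set T) (f : T -> R) : R :=
  inf [set f z | z in S].

Definition optset (R : realType) (T : Type) (S : set T) (f : T -> R) : set T :=
  [set z | S z /\ forall z', S z' -> f z <= f z'].

(* Z_eps, with eps t the bound for t = 1..N (eps 0 unused) *)
Definition Zeps (R : realType) (n m p N : nat) (C : 'M[R]_(p, n)) (Cd : 'M[R]_(n, p))
  (B : 'M[R]_(n, m)) (x0 : 'cV[R]_n) (r : nat -> 'cV[R]_p)
  (S : set ('M[R]_n * 'M[R]_(m, N))) (eps : nat -> R)
  : set ('M[R]_n * 'M[R]_(m, N)) :=
  [set AU | S AU /\ forall t : 'I_N,
     vnorm (yhat C Cd AU.1 B x0 AU.2 t.+1 - r t.+1) <= eps t.+1].

Definition epsstar (R : realType) (n m p N : nat) (C : 'M[R]_(p, n)) (Cd : 'M[R]_(n, p))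
  (B : 'M[R]_(n, m)) (x0 : 'cV[R]_n) (r : nat -> 'cV[R]_p)
  (AUs : 'M[R]_n * 'M[R]_(m, N)) (t : nat) : R :=
  vnorm (yhat C Cd AUs.1 B x0 AUs.2 t - r t).

Definition gammastar (R : realType) (n m p N : nat) (C : 'M[R]_(p, n))
  (Cd : 'M[R]_(n, p)) (B : 'M[R]_(n, m)) (x0 : 'cV[R]_n) (r : nat -> 'cV[R]_p)
  (S : set ('M[R]_n * 'M[R]_(m, N))) : R :=
  inf [set inf [set specnorm (C *m AU.1 *m Cd) | AU in
                  Zeps C Cd B x0 r S (epsstar C Cd B x0 r AUs)]
       | AUs in optset S (objM1 C B x0 r)].

(* Since C has full column rank, Cd C = 1, so the approximate outputs yhat of an
   optimal solution of (MOPUL1) are its true outputs C x_t and sum_t eps*_t = v*_M1.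
   For (A, U) in Z*_eps the residual of (AMOPUL1) at time t equals
   (yhat_t - r_t) - C A Cd (yhat_(t-1) - r_(t-1)), so its norm is at most
   eps*_t + ||C A Cd|| eps*_(t-1), where eps*_0 = 0 because r_0 = C x_0.
   Summing over t gives v*_A1 <= (1 + ||C A Cd||) v*_M1; then take infima. *)
From HB Require Import structures.
From mathcomp Require Import all_boot all_order all_algebra.
From mathcomp Require Import classical_sets reals.
From mathcomp Require Import ring lra.
Set Implicit Arguments. Unset Strict Implicit. Unset Printing Implicit Defensive.
Import Order.TTheory GRing.Theory Num.Theory.
Local Open Scope ring_scope.
Local Open Scope classical_set_scope.

Section EuclideanNorm.
Variable R : realType.

Lemma sumsq_ge0 k (v : 'cV[R]_k) : 0 <= \sum_(i < k) v i 0 ^+ 2.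
Proof. by apply: sumr_ge0 => i _; exact: sqr_ge0. Qed.

Lemma vnorm_ge0 k (v : 'cV[R]_k) : 0 <= vnorm v.
Proof. exact: sqrtr_ge0. Qed.

Lemma vnorm0 k : vnorm (0 : 'cV[R]_k) = 0.
Proof. by rewrite /vnorm big1 ?sqrtr0 // => i _; rewrite mxE expr0n. Qed.

Lemma vnorm_eq0 k (v : 'cV[R]_k) : vnorm v = 0 -> v = 0.
Proof.
move/eqP; rewrite sqrtr_eq0 => le_sum0.
have sum0 : \sum_(i < k) v i 0 ^+ 2 = 0 by apply/eqP; rewrite eq_le le_sum0 sumsq_ge0.
apply/matrixP => i j; rewrite (ord1 j) mxE.
have /eqP := @psumr_eq0P _ _ xpredT _ (fun l _ => sqr_ge0 (v l 0)) sum0 i isT.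
by rewrite sqrf_eq0 => /eqP.
Qed.

Lemma vnormN k (v : 'cV[R]_k) : vnorm (- v) = vnorm v.
Proof. by rewrite /vnorm; congr Num.sqrt; apply: eq_bigr => i _; rewrite mxE sqrrN. Qed.

Lemma vnormZ k (c : R) (v : 'cV[R]_k) : vnorm (c *: v) = `|c| * vnorm v.
Proof.
rewrite /vnorm (eq_bigr (fun i => c ^+ 2 * v i 0 ^+ 2)) => [|i _]; last first.
  by rewrite mxE exprMn.
by rewrite -mulr_sumr sqrtrM ?sqr_ge0 // sqrtr_sqr.
Qed.

Lemma normr_coord_le_vnorm k (v : 'cV[R]_k) j : `|v j 0| <= vnorm v.
Proof.
rewrite -sqrtr_sqr ler_sqrt ?sumsq_ge0 // (bigD1 j) //= lerDl.
by apply: sumr_ge0 => i _; exact: sqr_ge0.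
Qed.

Lemma cauchy_schwarz k (u v : 'cV[R]_k) :
  (\sum_(i < k) u i 0 * v i 0) ^+ 2 <=
  (\sum_(i < k) u i 0 ^+ 2) * (\sum_(i < k) v i 0 ^+ 2).
Proof.
set a := fun i => u i 0; set b := fun i => v i 0.
set Saa := \sum_(i < k) a i ^+ 2; set Sbb := \sum_(i < k) b i ^+ 2.
set Sab := \sum_(i < k) a i * b i.
have double_sum (f g : 'I_k -> R) :
    \sum_(i < k) \sum_(j < k) f i * g j = (\sum_(i < k) f i) * \sum_(j < k) g j.
  by rewrite mulr_suml; apply: eq_bigr => i _; rewrite mulr_sumr.
have lagrange : \sum_(i < k) \sum_(j < k) (a i * b j - a j * b i) ^+ 2 =
    Saa * Sbb + Sbb * Saa - 2 * (Sab * Sab).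
  rewrite -!double_sum mulr_sumr -!big_split /= -sumrB; apply: eq_bigr => i _.
  rewrite mulr_sumr -!big_split /= -sumrB; apply: eq_bigr => j _; ring.
have : 0 <= \sum_(i < k) \sum_(j < k) (a i * b j - a j * b i) ^+ 2.
  by apply: sumr_ge0 => i _; apply: sumr_ge0 => j _; exact: sqr_ge0.
rewrite lagrange expr2; lra.
Qed.

Lemma vnormD k (u v : 'cV[R]_k) : vnorm (u + v) <= vnorm u + vnorm v.
Proof.
have [u0 v0] := (sumsq_ge0 u, sumsq_ge0 v).
have cross : \sum_(i < k) u i 0 * v i 0 <= vnorm u * vnorm v.
  rewrite -sqrtrM // (le_trans (ler_norm _)) // -sqrtr_sqr ler_sqrt ?mulr_ge0 //.
  exact: cauchy_schwarz.
have expand : \sum_(i < k) (u + v) i 0 ^+ 2 =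
    \sum_(i < k) u i 0 ^+ 2 + \sum_(i < k) v i 0 ^+ 2
    + 2 * \sum_(i < k) u i 0 * v i 0.
  rewrite mulr_sumr -!big_split /=; apply: eq_bigr => i _; rewrite mxE; ring.
rewrite -[X in _ <= X]ger0_norm ?addr_ge0 ?vnorm_ge0 // -sqrtr_sqr.
rewrite /vnorm ler_sqrt ?sqr_ge0 // expand sqrrD !sqr_sqrtr //.
rewrite -/(vnorm u) -/(vnorm v); lra.
Qed.
End EuclideanNorm.

Section SpectralNorm.
Variable R : realType.

Definition specnorm_set a b (M : 'M[R]_(a, b)) : set R :=
  [set vnorm (M *m x) | x in [set x : 'cV[R]_b | vnorm x <= 1]].

Lemma has_ubound_specnorm_set a b (M : 'M[R]_(a, b)) : has_ubound (specnorm_set M).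
Proof.
exists (Num.sqrt (\sum_(i < a) (\sum_(j < b) `|M i j|) ^+ 2)).
move=> _ [x /= x_le1 <-]; rewrite /vnorm ler_sqrt; last first.
  by apply: sumr_ge0 => i _; exact: sqr_ge0.
apply: ler_sum => i _; rewrite -real_normK ?num_real // ler_sqr ?nnegrE //; last first.
  by apply: sumr_ge0 => j _.
rewrite mxE (le_trans (ler_norm_sum _ _ _)) //; apply: ler_sum => j _.
rewrite normrM ler_piMr //.
exact: le_trans (normr_coord_le_vnorm x j) x_le1.
Qed.

Lemma specnorm_ub a b (M : 'M[R]_(a, b)) x :
  vnorm x <= 1 -> vnorm (M *m x) <= specnorm M.
Proof. by move=> x_le1; apply: (ub_le_sup (has_ubound_specnorm_set M)); exists x. Qed.

Lemma specnorm_ge0 a b (M : 'M[R]_(a, b)) : 0 <= specnorm M.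
Proof. by rewrite -(vnorm0 R a) -(mulmx0 _ M) specnorm_ub // vnorm0. Qed.

Lemma vnorm_mulmx_le a b (M : 'M[R]_(a, b)) x :
  vnorm (M *m x) <= specnorm M * vnorm x.
Proof.
have [/vnorm_eq0 ->|x_neq0] := eqVneq (vnorm x) 0.
  by rewrite mulmx0 !vnorm0 mulr0.
have x_gt0 : 0 < vnorm x by rewrite lt_def x_neq0 vnorm_ge0.
have := @specnorm_ub _ _ M ((vnorm x)^-1 *: x).
rewrite -scalemxAr !vnormZ ger0_norm ?invr_ge0 ?vnorm_ge0 // mulVf // lexx.
by rewrite mulrC ler_pdivrMr // => /(_ isT).
Qed.
End SpectralNorm.

Lemma ginv_full_col_rankK (R : fieldType) n p (C : 'M[R]_(p, n)) (Cd : 'M[R]_(n, p)) :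
  \rank C = n -> C *m Cd *m C = C -> Cd *m C = 1%:M.
Proof.
move=> rankC CCdC; apply/eqP; rewrite -subr_eq0 -trmx_eq0.
have C_free : row_free C^T by rewrite /row_free mxrank_tr rankC.
rewrite -(mulmx_free_eq0 _ C_free) -trmx_mul trmx_eq0.
by rewrite mulmxBr mulmxA CCdC mulmx1 subrr.
Qed.

Lemma ler_sum_shift (R : numDomainType) N (e : nat -> R) :
  e 0%N = 0 -> (forall t, 0 <= e t) -> \sum_(t < N) e t <= \sum_(t < N) e t.+1.
Proof.
move=> e0 e_ge0; case: N => [|N]; first by rewrite !big_ord0.
by rewrite big_ord_recl big_ord_recr /= e0 add0r lerDl.
Qed.

Section Infima.
Variable R : realType.

Lemma optval_le (T : Type) (S : set T) (f : T -> R) z :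
  (forall z, 0 <= f z) -> S z -> optval S f <= f z.
Proof.
move=> f_ge0 Sz; apply: ge_inf; last by exists z.
by exists 0 => _ [w _ <-].
Qed.

Lemma optval_optset (T : Type) (S : set T) (f : T -> R) z :
  optset S f z -> optval S f = f z.
Proof.
move=> [Sz z_min]; have lb_fz : lbound [set f w | w in S] (f z).
  by move=> _ [w Sw <-]; exact: z_min.
apply/eqP; rewrite eq_le (lb_le_inf _ lb_fz) ?andbT; last by exists (f z), z.
by apply: ge_inf; [exists (f z) | exists z].
Qed.

Lemma le_1Dinf_mul (H : set R) (a b : R) :
  H !=set0 -> 0 <= b -> (forall h, H h -> a <= (1 + h) * b) ->
  a <= (1 + inf H) * b.
Proof.
move=> [h0 Hh0] b_ge0 le_a.
have [b0|b_neq0] := eqVneq b 0; first by move: (le_a _ Hh0); rewrite b0 !mulr0.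
have b_gt0 : 0 < b by rewrite lt_def b_neq0 b_ge0.
rewrite -ler_pdivrMr // -lerBlDl; apply: lb_le_inf; first by exists h0.
by move=> h /le_a; rewrite -ler_pdivrMr // => ?; lra.
Qed.
End Infima.

Section Approximation.
Variables (R : realType) (n m p N : nat).
Variables (B : 'M[R]_(n, m)) (C : 'M[R]_(p, n)) (Cd : 'M[R]_(n, p)).
Variables (x0 : 'cV[R]_n) (r : nat -> 'cV[R]_p).
Hypothesis r0 : r 0%N = C *m x0.

Lemma objM1_ge0 (AU : 'M[R]_n * 'M[R]_(m, N)) : 0 <= objM1 C B x0 r AU.
Proof. by apply: sumr_ge0 => t _; exact: vnorm_ge0. Qed.

Lemma objA1_ge0 (AU : 'M[R]_n * 'M[R]_(m, N)) : 0 <= objA1 C Cd B r AU.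
Proof. by apply: sumr_ge0 => t _; exact: vnorm_ge0. Qed.

Lemma yhat_traj (A : 'M[R]_n) (U : 'M[R]_(m, N)) t :
  Cd *m C = 1%:M -> yhat C Cd A B x0 U t = C *m traj A B x0 U t.
Proof.
move=> CdC; elim: t => [|t IH] //=.
by rewrite IH -!mulmxA (mulmxA Cd) CdC mul1mx mulmxDr !mulmxA.
Qed.

Lemma sum_epsstar_objM1 (AU : 'M[R]_n * 'M[R]_(m, N)) :
  Cd *m C = 1%:M -> \sum_(t < N) epsstar C Cd B x0 r AU t.+1 = objM1 C B x0 r AU.
Proof. by move=> CdC; apply: eq_bigr => t _; rewrite /epsstar yhat_traj. Qed.

Lemma Zeps_epsstar (S : set ('M[R]_n * 'M[R]_(m, N))) AU :
  S AU -> Zeps C Cd B x0 r S (epsstar C Cd B x0 r AU) AU.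
Proof. by []. Qed.

Lemma objA1_residual_le (A : 'M[R]_n) (U : 'M[R]_(m, N)) t :
  let eps := epsstar C Cd B x0 r (A, U) in
  vnorm (C *m A *m Cd *m r t + C *m B *m ucol U t - r t.+1)
    <= specnorm (C *m A *m Cd) * eps t + eps t.+1.
Proof.
rewrite /epsstar /=; set y := yhat C Cd A B x0 U.
have -> : C *m A *m Cd *m r t + C *m B *m ucol U t - r t.+1 =
          - (C *m A *m Cd *m (y t - r t)) + (y t.+1 - r t.+1).
  by rewrite /= mulmxBr opprB !addrA subrK.
by apply: le_trans (vnormD _ _) _; rewrite vnormN lerD ?vnorm_mulmx_le.
Qed.

Lemma objA1_le_epsstar (A : 'M[R]_n) (U : 'M[R]_(m, N)) :
  objA1 C Cd B r (A, U)
    <= (1 + specnorm (C *m A *m Cd)) * \sum_(t < N) epsstar C Cd B x0 r (A, U) t.+1.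
Proof.
set eps := epsstar C Cd B x0 r (A, U); set g := specnorm (C *m A *m Cd).
have eps0 : eps 0%N = 0 by rewrite /eps /epsstar /= r0 subrr vnorm0.
have eps_ge0 t : 0 <= eps t by exact: vnorm_ge0.
have shift := ler_sum_shift N eps0 eps_ge0.
have g_ge0 : 0 <= g by exact: specnorm_ge0.
have : objA1 C Cd B r (A, U) <= g * \sum_(t < N) eps t + \sum_(t < N) eps t.+1.
  by rewrite mulr_sumr -big_split /=; apply: ler_sum => t _; exact: objA1_residual_le.
nra.
Qed.

Lemma optvalA1_le (S : set ('M[R]_n * 'M[R]_(m, N))) AUs AU :
  Cd *m C = 1%:M -> optset S (objM1 C B x0 r) AUs ->
  Zeps C Cd B x0 r S (epsstar C Cd B x0 r AUs) AU ->
  optval S (objA1 C Cd B r)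
    <= (1 + specnorm (C *m AU.1 *m Cd)) * optval S (objM1 C B x0 r).
Proof.
case: AU => A U CdC optAUs [SAU Z_AU].
rewrite (optval_optset optAUs) -sum_epsstar_objM1 //.
apply: le_trans (optval_le objA1_ge0 SAU) _.
apply: le_trans (objA1_le_epsstar A U) _.
rewrite ler_wpM2l ?addr_ge0 ?specnorm_ge0 //.
by apply: ler_sum => t _; exact: Z_AU.
Qed.
End Approximation.

Theorem theorem5 (R : realType) (n m p N : nat)
  (hn : (0 < n)%N) (hm : (0 < m)%N) (hp : (0 < p)%N) (hN : (0 < N)%N)
  (B : 'M[R]_(n, m)) (C : 'M[R]_(p, n)) (Cd : 'M[R]_(n, p))
  (hC : \rank C = n) (hCd : is_MP_inverse C Cd)
  (x0 : 'cV[R]_n) (r : nat -> 'cV[R]_p) (hr0 : r 0%N = C *m x0)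
  (S : set ('M[R]_n * 'M[R]_(m, N)))
  (hatt : optset S (objM1 C B x0 r) !=set0) :
  optval S (objA1 C Cd B r)
    <= (1 + gammastar C Cd B x0 r S) * optval S (objM1 C B x0 r).
Proof.
have CdC : Cd *m C = 1%:M by case: hCd => CCdC _ _ _; exact: ginv_full_col_rankK.
have [AUs optAUs] := hatt.
have vM1_ge0 : 0 <= optval S (objM1 C B x0 r).
  by rewrite (optval_optset optAUs) objM1_ge0.
apply: le_1Dinf_mul => //; first by eexists; exists AUs.
move=> _ [AUs' optAUs' <-]; apply: le_1Dinf_mul => //.
  by eexists; exists AUs'; first exact: Zeps_epsstar optAUs'.1.
by move=> _ [AU Z_AU <-]; exact: optvalA1_le Z_AU.
Qed.
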